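(* Let $X$ be a set with $n\ge1$ elements and $\lambda_n=|\mathfrak{P}(X)|$. Then $$\lambda_n=\sum_{k=1}^{n}\alpha_{n,k}\left(\sum_{\ell=0}^{\lfloor k/3\rfloor}\beta_{k,\ell}\,3^{\ell}\right),\qquad \beta_{k,\ell}=\frac{k!}{6^{\ell}\,\ell!\,(k-3\ell)!},$$ where $\alpha_{n,k}$ is the Stirling number of the second kind (number of partitions of an $n$-set into $k$ blocks) and $\beta_{k,\ell}$ is the number of partitions of a $k$-element set into $\ell$ blocks of size $3$ and $k-3\ell$ blocks of size $1$.
   Context: A set pair system on a finite set $X$ is a set of ordered pairs $(S,H)$ of subsets of $X$ with $S\ne\emptyset$ and $S\cap H=\emptyset$. A polestar system is a set pair system $\mathcal{S}$ with (PL1) $\{S:(S,H)\in\mathcal{S}\}$ is a partition of $X$; (PL2) distinct $(S,H),(S',H')\in\mathcal{S}$ have $S\ne S'$; (PL3) for each $(S,H)\in\mathcal{S}$ with $H\ne\emptyset$, $(H,\emptyset)\in\mathcal{S}$ and there is exactly one $(S',H')\in\mathcal{S}$ with $(S',H')\ne(S,H)$ and $H'=H$. $\mathfrak{P}(X)$ is the set of polestar systems on $X$. *)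

From mathcomp Require Import all_boot.
Set Implicit Arguments. Unset Strict Implicit. Unset Printing Implicit Defensive.

Definition set_pair_system (X : finType) (Sys : {set {set X} * {set X}}) : bool :=
  [forall p in Sys, (p.1 != set0) && [disjoint p.1 & p.2]].

Definition PL1 (X : finType) (Sys : {set {set X} * {set X}}) : bool :=
  partition [set p.1 | p in Sys] [set: X].

Definition PL2 (X : finType) (Sys : {set {set X} * {set X}}) : bool :=
  [forall p in Sys, forall q in Sys, (p != q) ==> (p.1 != q.1)].

Definition PL3 (X : finType) (Sys : {set {set X} * {set X}}) : bool :=
  [forall p in Sys, (p.2 != set0) ==>
    (((p.2, set0) \in Sys) &&
     (#|[set q in Sys | (q != p) && (q.2 == p.2)]| == 1))].

Definition polestar_system (X : finType) (Sys : {set {set X} * {set X}}) : bool :=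
  [&& set_pair_system Sys, PL1 Sys, PL2 Sys & PL3 Sys].

Definition num_polestar (X : finType) : nat :=
  #|[set Sys : {set {set X} * {set X}} | polestar_system Sys ]|.

Definition alpha (n k : nat) : nat :=
  #|[set P : {set {set 'I_n}} | partition P [set: 'I_n] && (#|P| == k)]|.

(* beta_{k,l} = k! / (6^l l! (k-3l)!)  (an exact division for 3l <= k) *)
Definition beta (k l : nat) : nat :=
  k`! %/ (6 ^ l * l`! * (k - 3 * l)`!).

From mathcomp Require Import all_boot zify.
Set Implicit Arguments. Unset Strict Implicit. Unset Printing Implicit Defensive.

(* A polestar system is determined by the partition [P] formed by its first
   components and by the map [f : S |-> H] on [P].  By (PL3) the non-empty values
   of [f] are blocks of [P] that [f] sends to the empty set and that are attained
   exactly twice, so the system amounts to a family of disjoint triples of blocks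
   [{S1, S2, H}] with [f S1 = f S2 = H], together with the choice of the pole [H]
   inside each triple.  On [k] blocks there are [sum_l beta k l * 3 ^ l] such
   choices; this count [c k] is obtained from the recurrence
   [c (k + 1) = c k + 3 * 'C(k, 2) * c (k - 2)], which follows by looking at one
   block: it is free, the pole of a triple, or one of the two other members of
   a triple.  Grouping partitions by their number of blocks gives the formula. *)


Lemma bin2_mul2 n : 'C(n, 2) * 2 = n * n.-1.
Proof. by rewrite (bin_ffact n 2) !ffactnS ffactn0 muln1. Qed.

Lemma mul_bin_bin2 k j : 'C(k, j.+2) * 'C(j.+2, 2) = 'C(k, 2) * 'C(k - 2, j).
Proof.
apply/eqP; rewrite -(eqn_pmul2r (fact_gt0 2)) -(eqn_pmul2r (fact_gt0 j)); apply/eqP.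
have fact_j2 : 'C(j.+2, 2) * 2`! * j`! = j.+2`!.
  by rewrite -mulnA -(bin_fact (isT : 2 <= j.+2)) subn2.
have ffact_k : 'C(k, 2) * 2`! * ('C(k - 2, j) * j`!) = k ^_ j.+2.
  by rewrite bin_ffact bin_ffact !ffactnS ffactn0 muln1 subn2 mulnA.
by rewrite -2!mulnA (mulnA _ 2`!) fact_j2 bin_ffact -ffact_k; lia.
Qed.

(* [triples l] counts the partitions of a [3l]-set into triples: the block of
   the largest of [3(i+1)] elements picks its two companions among the other [3i+2]. *)
Definition triples (l : nat) : nat := \prod_(i < l) 'C((3 * i).+2, 2).

Lemma fact_mul3 l : (3 * l)`! = 6 ^ l * l`! * triples l.
Proof.
elim: l => [|l IH]; first by rewrite /triples big_ord0.
rewrite /triples big_ord_recr /= -/(triples l).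
have -> : 3 * l.+1 = (3 * l).+3 by lia.
have := bin2_mul2 (3 * l).+2.
rewrite !factS IH expnS /=; nia.
Qed.

Definition triple_choices (k l : nat) : nat := 'C(k, 3 * l) * triples l.

Lemma beta_triple_choices k l : 3 * l <= k -> beta k l = triple_choices k l.
Proof.
move=> le3lk; rewrite /beta -(bin_fact le3lk) fact_mul3 /triple_choices.
have -> : 'C(k, 3 * l) * (6 ^ l * l`! * triples l * (k - 3 * l)`!)
   = 'C(k, 3 * l) * triples l * (6 ^ l * l`! * (k - 3 * l)`!) by lia.
by rewrite mulnK // !muln_gt0 expn_gt0 /= !fact_gt0.
Qed.

Lemma triple_choices_small k l : k %/ 3 < l -> triple_choices k l = 0.
Proof. by rewrite ltn_divLR // => lt_k; rewrite /triple_choices bin_small //; lia. Qed.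

Lemma triple_choicesn0 k : triple_choices k 0 = 1.
Proof. by rewrite /triple_choices muln0 bin0 /triples big_ord0. Qed.

(* Either the last element lies in no triple, or its triple is completed by a
   pair among the other [k] elements. *)
Lemma triple_choicesSS k l :
  triple_choices k.+1 l.+1 = triple_choices k l.+1 + 'C(k, 2) * triple_choices (k - 2) l.
Proof.
rewrite /triple_choices /triples big_ord_recr /= -/(triples l).
have -> : 3 * l.+1 = (3 * l).+3 by lia.
rewrite binS mulnDl; congr (_ + _).
by rewrite mulnA mulnAC mul_bin_bin2; lia.
Qed.

Definition pole_count (k : nat) : nat :=
  \sum_(0 <= l < (k %/ 3).+1) triple_choices k l * 3 ^ l.

Lemma pole_count_widen k N : k %/ 3 < N ->
  \sum_(0 <= l < N) triple_choices k l * 3 ^ l = pole_count k.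
Proof.
move=> ltN; rewrite /pole_count (big_cat_nat _ (n := (k %/ 3).+1)) //=.
rewrite [X in _ + X]big_nat_cond [X in _ + X]big1 ?addn0 //.
by move=> l /andP[/andP[lt_l _] _]; rewrite triple_choices_small.
Qed.

Lemma pole_countS k : pole_count k.+1 = pole_count k + 3 * 'C(k, 2) * pole_count (k - 2).
Proof.
have div3_small j : j <= k.+1 -> j %/ 3 < k.+2.
  by move=> le_j; apply: leq_ltn_trans (leq_div _ _) _; lia.
rewrite -(pole_count_widen (N := k.+3)); last exact: leq_trans (div3_small _ _) _.
rewrite -(pole_count_widen (k := k) (N := k.+3)); last exact: leq_trans (div3_small _ _) _.
rewrite -(pole_count_widen (k := k - 2) (N := k.+2)); last by apply: div3_small; lia.
rewrite [LHS]big_nat_recl // [X in _ = X + _]big_nat_recl // !triple_choicesn0.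
under eq_bigr => l _ do rewrite triple_choicesSS mulnDl.
rewrite big_split /= -addnA; congr (_ + (_ + _)).
by rewrite big_distrr /=; apply: eq_bigr => l _; rewrite expnS; lia.
Qed.

Lemma sum_beta k : \sum_(0 <= l < (k %/ 3).+1) beta k l * 3 ^ l = pole_count k.
Proof.
apply: eq_big_nat => l /andP[_]; rewrite ltnS leq_divRL // => le_l.
by rewrite beta_triple_choices // mulnC.
Qed.

Lemma cards2_eq (T : finType) (F : {set T}) a b :
  a \in F -> b \in F -> a != b -> #|F| = 2 -> F = [set a; b].
Proof.
move=> aF bF neq_ab cardF; apply/eqP; rewrite eq_sym eqEcard cardF cards2 neq_ab leqnn andbT.
by apply/subsetP => u; rewrite !inE => /orP[] /eqP ->.
Qed.

Lemma cards2_other (T : finType) (F : {set T}) u :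
  #|F| = 2 -> u \in F -> exists2 v, v != u & F = [set u; v].
Proof.
move=> /eqP /cards2P [a [b [neq_ab ->]]]; rewrite !inE => /orP[] /eqP ->.
  by exists b; rewrite // eq_sym.
by exists a; rewrite // setUC.
Qed.

Definition ordered_pairs (T : finType) (B : {set T}) : {set T * T} :=
  [set p | (p.1 \in B) && (p.2 \in B :\ p.1)].

Lemma card_ordered_pairs (T : finType) (B : {set T}) :
  #|ordered_pairs B| = #|B| * (#|B| - 1).
Proof.
rewrite -sum1_card (eq_bigl (fun p : T * T => (p.1 \in B) && (p.2 \in B :\ p.1))); last first.
  by move=> p; rewrite inE.
rewrite -(pair_big_dep (mem B) (fun y z => z \in B :\ y) (fun _ _ => 1)) /=.
rewrite (eq_bigr (fun _ => #|B| - 1)) ?sum_nat_const // => y yB.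
by rewrite sum1_card; have := cardsD1 y B; rewrite yB /=; lia.
Qed.

Lemma sum_nat_bool_card (U : finType) (D : {set U}) (P : pred U) :
  \sum_(i in D) (P i : nat) = #|[set i in D | P i]|.
Proof.
rewrite -sum1_card big_mkcond [RHS]big_mkcond /=; apply: eq_bigr => i _.
by rewrite inE; case: (i \in D); case: (P i).
Qed.

Lemma cardsD3 (T : finType) (A : {set T}) a b c : a \in A -> b \in A -> c \in A ->
  a != b -> a != c -> b != c -> #|A :\: [set a; b; c]| = #|A| - 3.
Proof.
move=> aA bA cA neq_ab neq_ac neq_bc.
have -> : A :\: [set a; b; c] = A :\ a :\ b :\ c.
  by apply/setP => u; rewrite !inE; case: (u == a); case: (u == b); case: (u == c).
have := cardsD1 a A; have := cardsD1 b (A :\ a); have := cardsD1 c (A :\ a :\ b).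
by rewrite !inE aA bA cA !(eq_sym _ a) (eq_sym c b) neq_ab neq_ac neq_bc /=; lia.
Qed.

Section PoleMaps.
Variables (T : finType) (e : T).

(* [e] stands for the empty set: [f t = e] means that [t] has no pole.  The
   non-trivial part of a pole map is a family of disjoint triples [{a, b, c}]
   with [f a = f b = c]; each triple carries 3 choices of its pole [c]. *)
Definition pole_map (A : {set T}) (f : {ffun T -> T}) : bool :=
  [forall t, ((t \notin A) ==> (f t == e)) &&
     ((f t != e) ==> [&& f t \in A, f (f t) == e & #|[set u | f u == f t]| == 2])].

Definition pole_maps (A : {set T}) : {set {ffun T -> T}} := [set f | pole_map A f].

Lemma pole_mapP (A : {set T}) (f : {ffun T -> T}) : reflect
  ((forall t, t \notin A -> f t = e) /\
   (forall t, f t != e -> [/\ f t \in A, f (f t) = e & #|[set u | f u == f t]| = 2]))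
  (f \in pole_maps A).
Proof.
rewrite inE; apply: (iffP forallP) => [fA | [outA inA] t].
  split=> t; have /andP[/implyP out_t /implyP in_t] := fA t.
    by move=> /out_t /eqP.
  by move=> /in_t /and3P[-> /eqP -> /eqP ->].
apply/andP; split; apply/implyP; first by move=> /outA ->.
by move=> /inA [-> -> ->]; rewrite !eqxx.
Qed.

Lemma pole_maps_set0 : #|pole_maps set0| = 1.
Proof.
suff -> : pole_maps set0 = [set [ffun _ => e]] by rewrite cards1.
apply/setP => f; rewrite in_set1; apply/pole_mapP/eqP => [[outA _] | ->].
  by apply/ffunP => t; rewrite ffunE outA ?inE.
by split=> t; rewrite ffunE // eqxx.
Qed.

Definition redirect (f : {ffun T -> T}) (a b w : T) : {ffun T -> T} :=
  [ffun t => if (t == a) || (t == b) then w else f t].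

Section Triple.
Variables (A : {set T}) (a b c : T).
Hypotheses (eA : e \notin A) (aA : a \in A) (bA : b \in A) (cA : c \in A).
Hypotheses (neq_ab : a != b) (neq_ac : a != c) (neq_bc : b != c).
Let B := A :\: [set a; b; c].

Let subBA : B \subset A. Proof. exact: subsetDl. Qed.
Let aB : a \notin B. Proof. by rewrite !inE eqxx. Qed.
Let bB : b \notin B. Proof. by rewrite !inE eqxx orbT. Qed.
Let cB : c \notin B. Proof. by rewrite !inE eqxx !orbT. Qed.
Let neq_ce : c != e. Proof. by apply: contraNneq eA => <-. Qed.

Lemma redirect_pole_map f : f \in pole_maps B -> redirect f a b c \in pole_maps A.
Proof.
move=> /pole_mapP[outB inB].
have not_pole w u : w \notin B -> w != e -> f u != w.
  by move=> wB we; apply/eqP => fu; have [] := inB u; rewrite fu ?(negPf wB).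
apply/pole_mapP; split=> [t tA | t].
  rewrite ffunE; have -> : (t == a) || (t == b) = false.
    by apply/negbTE/norP; split; apply: contraNneq tA => ->.
  by apply: outB; apply: contra tA; apply: (subsetP subBA).
rewrite ffunE; case: ifP => [_ _ | /norP[neq_ta neq_tb] fte].
  have fiber_c : [set u | redirect f a b c u == c] = [set a; b].
    apply/setP => u; rewrite !inE ffunE.
    by case: ifP => _; rewrite ?eqxx // (negbTE (not_pole _ _ cB neq_ce)).
  split=> //; last by rewrite fiber_c cards2 neq_ab.
  by rewrite ffunE (eq_sym c a) (eq_sym c b) (negbTE neq_ac) (negbTE neq_bc) outB.
have [ftB fft fiber2] := inB t fte.
have neq_fta : f t != a by apply: contraNneq aB => <-.
have neq_ftb : f t != b by apply: contraNneq bB => <-.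
split; first exact: (subsetP subBA).
  by rewrite ffunE (negbTE neq_fta) (negbTE neq_ftb).
rewrite -fiber2; apply: eq_card => u; rewrite !inE ffunE.
case: ifP => // /orP[] /eqP ->; [rewrite (outB _ aB) | rewrite (outB _ bB)];
  by rewrite (eq_sym e) (negbTE fte); apply/negbTE; apply: contraNneq cB => ->.
Qed.

Lemma unredirect_pole_map f : f \in pole_maps A -> f a = c -> f b = c ->
  redirect f a b e \in pole_maps B.
Proof.
move=> /pole_mapP[outA inA] fa fb.
have [_ fc fiber2] : [/\ c \in A, f c = e & #|[set u | f u == c]| = 2].
  by have := inA a; rewrite fa; apply.
have fiber_c : [set u | f u == c] = [set a; b] by apply: cards2_eq; rewrite ?inE ?fa ?fb.
apply/pole_mapP; split=> [t | t].
  rewrite ffunE; case: ifP => // /norP[neq_ta neq_tb].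
  have [-> _ //| neq_tc] := eqVneq t c.
  by rewrite !inE (negbTE neq_ta) (negbTE neq_tb) (negbTE neq_tc) => /outA.
rewrite ffunE; case: ifP => [_ | /norP[neq_ta neq_tb] fte]; first by rewrite eqxx.
have [ftA fft fiber2'] := inA t fte.
have neq_fta : f t != a by apply: contraNneq neq_ce => fta; rewrite -fa -fta fft.
have neq_ftb : f t != b by apply: contraNneq neq_ce => ftb; rewrite -fb -ftb fft.
have neq_ftc : f t != c.
  apply/negP => /eqP ftc; have : t \in [set u | f u == c] by rewrite inE ftc.
  by rewrite fiber_c !inE (negbTE neq_ta) (negbTE neq_tb).
split.
- by rewrite !inE ftA (negbTE neq_fta) (negbTE neq_ftb) (negbTE neq_ftc).
- by rewrite ffunE (negbTE neq_fta) (negbTE neq_ftb).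
- rewrite -fiber2'; apply: eq_card => u; rewrite !inE ffunE.
  case: ifP => // /orP[] /eqP ->; [rewrite fa | rewrite fb];
    by rewrite eq_sym (negbTE fte) eq_sym (negbTE neq_ftc).
Qed.

Lemma card_pole_maps_triple :
  #|[set f in pole_maps A | (f a == c) && (f b == c)]| = #|pole_maps B|.
Proof.
have inj : {in pole_maps B &, injective (fun f => redirect f a b c)}.
  move=> f1 f2 /pole_mapP[out1 _] /pole_mapP[out2 _] /ffunP eq12.
  apply/ffunP => t; have := eq12 t; rewrite !ffunE.
  by case: ifP => // /orP[] /eqP ->; rewrite out1 ?out2.
rewrite -(card_in_imset inj); apply: eq_card => f; rewrite [f \in [set _ in _ | _]]inE.
apply/andP/imsetP => [[fA /andP[/eqP fa /eqP fb]] | [g gB ->]].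
  exists (redirect f a b e); first exact: unredirect_pole_map.
  by apply/ffunP => t; rewrite !ffunE; case: ifP => [/orP[] /eqP -> | ->].
split; first exact: redirect_pole_map.
by rewrite !ffunE !eqxx orbT /= eqxx.
Qed.
End Triple.

Section Vertex.
Variables (A : {set T}) (x : T).
Hypotheses (eA : e \notin A) (xA : x \in A).
Let pairs := ordered_pairs (A :\ x).

Let neq_xe : x != e. Proof. by apply: contraNneq eA => <-. Qed.

Lemma pole_maps_free_vertex :
  [set f in pole_maps A | (f x == e) && [forall t, f t != x]] = pole_maps (A :\ x).
Proof.
apply/setP => f; rewrite [f \in [set _ in _ | _]]inE.
apply/andP/pole_mapP => [[/pole_mapP[outA inA] /andP[/eqP fx /forallP not_x]] | [outAx inAx]].
  split=> [t | t fte]; first by rewrite !inE negb_and negbK => /orP[/eqP -> // | /outA].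
  by have [ftA fft fiber2] := inA t fte; rewrite !inE ftA not_x.
split; last first.
  rewrite outAx ?inE ?eqxx //=; apply/forallP => t.
  have [-> | fte] := eqVneq (f t) e; first by rewrite eq_sym.
  by have [ftAx _ _] := inAx t fte; apply: contraTneq ftAx => ->; rewrite !inE eqxx.
apply/pole_mapP; split=> [t tA | t fte]; first by apply: outAx; rewrite !inE (negbTE tA) andbF.
by have [] := inAx t fte; rewrite !inE => /andP[_ ->] -> ->.
Qed.

Definition star_pair (f : {ffun T -> T}) (p : T * T) := (f p.1 == x) && (f p.2 == x).
Definition pole_partner (f : {ffun T -> T}) (p : T * T) := (f x == p.1) && (f p.2 == p.1).

Lemma ordered_pairsP p : p \in pairs ->
  [/\ p.1 \in A, p.2 \in A, p.1 != p.2, p.1 != x & p.2 != x].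
Proof. by rewrite !inE => /andP[/andP[-> ->] /and3P[neq21 -> ->]]; rewrite eq_sym neq21. Qed.

Lemma star_pairs_pole f : f \in pole_maps A -> f x != e ->
  [set p in pairs | star_pair f p] = set0.
Proof.
move=> /pole_mapP[_ inA] fxe; apply/setP => p; rewrite !inE /star_pair.
have [fp1 | _] := eqVneq (f p.1) x; last by rewrite andbF.
have := inA p.1; rewrite fp1 => /(_ neq_xe) [_ ffx _].
by rewrite ffx eqxx in fxe.
Qed.

Lemma pole_partners_nopole (f : {ffun T -> T}) :
  f x = e -> [set p in pairs | pole_partner f p] = set0.
Proof.
move=> fx; apply/setP => p; rewrite !inE /pole_partner fx.
by have [<- | _] := eqVneq e p.1; rewrite ?(negbTE eA) ?andbF.
Qed.

Lemma card_star_pairs f t : f \in pole_maps A -> f x = e -> f t = x ->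
  #|[set p in pairs | star_pair f p]| = 2.
Proof.
move=> /pole_mapP[outA inA] fx ft.
have := inA t; rewrite ft => /(_ neq_xe) [_ _ fiber2].
have t_fiber : t \in [set u | f u == x] by rewrite inE ft.
have [v neq_vt fiber_x] := cards2_other fiber2 t_fiber.
have : v \in [set u | f u == x] by rewrite fiber_x !inE eqxx orbT.
rewrite inE => /eqP fv.
have star u : f u = x -> u != x /\ u \in A.
  move=> fu; split; first by apply: contraNneq neq_xe => eq_ux; rewrite -fu eq_ux fx.
  by apply: contraNT neq_xe => /outA <-; rewrite fu.
have [[neq_tx tA] [neq_vx vA]] := (star t ft, star v fv).
suff -> : [set p in pairs | star_pair f p] = [set (t, v); (v, t)].
  by rewrite cards2 xpair_eqE eq_sym (negbTE neq_vt).
apply/setP => [[a b]]; rewrite !inE /star_pair /=; apply/idP/idP.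
  case/and3P => /and4P[_ neq_ba _ _] fa fb; move: neq_ba.
  have : a \in [set t; v] by rewrite -fiber_x inE fa.
  have : b \in [set t; v] by rewrite -fiber_x inE fb.
  by rewrite !inE => /orP[]/eqP-> /orP[]/eqP->; rewrite ?eqxx ?orbT.
by case/orP => /eqP[-> ->]; rewrite neq_tx tA neq_vx vA ft fv eqxx ?neq_vt // eq_sym neq_vt.
Qed.

Lemma card_pole_partners f : f \in pole_maps A -> f x != e ->
  #|[set p in pairs | pole_partner f p]| = 1.
Proof.
move=> /pole_mapP[outA inA] fxe; have [yA fy fiber2] := inA x fxe.
have [y fx] : exists y, f x = y by exists (f x).
rewrite /pole_partner fx in fxe yA fy fiber2 *.
have x_fiber : x \in [set u | f u == y] by rewrite inE fx.
have [z neq_zx fiber_y] := cards2_other fiber2 x_fiber.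
have : z \in [set u | f u == y] by rewrite fiber_y !inE eqxx orbT.
rewrite inE => /eqP fz.
have neq_yx : y != x by apply: contraNneq fxe => eq_yx; rewrite -fy eq_yx fx eq_yx.
have neq_zy : z != y by apply: contraNneq fxe => eq_zy; rewrite -fy -{2}eq_zy fz.
have zA : z \in A by apply: contraNT fxe => /outA <-; rewrite fz.
suff -> : [set p in pairs | (y == p.1) && (f p.2 == p.1)] = [set (y, z)] by rewrite cards1.
apply/setP => [[a b]]; rewrite !inE /=; apply/idP/idP.
  case/and3P => /and4P[_ _ neq_bx _] /eqP <- fb.
  have : b \in [set x; z] by rewrite -fiber_y inE.
  by rewrite !inE (negbTE neq_bx) /= => /eqP ->.
by move/eqP => [-> ->]; rewrite neq_yx yA neq_zy neq_zx zA fz !eqxx.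
Qed.

(* A free [x] gets weight 2, a pole [x] weight 1 from each ordering of its two
   stars, and a star [x] weight 2 from its pole and partner. *)
Lemma vertex_weight f : f \in pole_maps A ->
  2 = 2 * ((f x == e) && [forall t, f t != x]) + #|[set p in pairs | star_pair f p]|
      + 2 * #|[set p in pairs | pole_partner f p]|.
Proof.
move=> fA; have [fx | fxe] := eqVneq (f x) e; last first.
  by rewrite (star_pairs_pole fA fxe) card_pole_partners // cards0.
rewrite pole_partners_nopole // cards0 muln0 addn0 /=.
case: forallP => [not_x | /forallP]; last first.
  by rewrite negb_forall => /existsP[t /negPn /eqP ft]; rewrite (card_star_pairs fA fx ft).
suff -> : [set p in pairs | star_pair f p] = set0 by rewrite cards0.
by apply/setP => p; rewrite !inE /star_pair (negbTE (not_x p.1)) andbF.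
Qed.

(* Double counting: by [vertex_weight] every pole map on [A] is counted with
   total weight 2 on the right-hand side. *)
Lemma card_pole_maps_vertex : 2 * #|pole_maps A| = 2 * #|pole_maps (A :\ x)| +
  \sum_(p in pairs) (#|pole_maps (A :\: [set p.1; p.2; x])|
                     + 2 * #|pole_maps (A :\: [set x; p.2; p.1])|).
Proof.
rewrite [2 * #|pole_maps A|]mulnC -sum_nat_const (eq_bigr _ vertex_weight).
rewrite big_split big_split /= -!big_distrr /=.
rewrite -addnA sum_nat_bool_card pole_maps_free_vertex; congr (_ + _).
have exchange c : \sum_(f in pole_maps A) #|[set p in pairs | c f p]|
               = \sum_(p in pairs) #|[set f in pole_maps A | c f p]|.
  under eq_bigr => f _ do rewrite -sum_nat_bool_card.
  by rewrite exchange_big /=; apply: eq_bigr => p _; rewrite sum_nat_bool_card.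
rewrite big_split /= -big_distrr /= !exchange; congr (_ + 2 * _);
  apply: eq_bigr => p /ordered_pairsP[p1A p2A neq12 neq1x neq2x].
  by rewrite card_pole_maps_triple.
by rewrite card_pole_maps_triple // eq_sym.
Qed.
End Vertex.

Theorem card_pole_maps (A : {set T}) : e \notin A -> #|pole_maps A| = pole_count #|A|.
Proof.
have [m] := ubnP #|A|; elim: m A => // m IH A lt_Am eA.
have [-> | /set0Pn[x xA]] := eqVneq A set0.
  by rewrite pole_maps_set0 cards0 /pole_count big_nat1 triple_choicesn0.
have [k cardA cardAx] : exists2 k, #|A| = k.+1 & #|A :\ x| = k.
  by exists #|A :\ x|; rewrite // (cardsD1 x A) xA.
have e_out (B : {set T}) : B \subset A -> e \notin B.
  by move=> /subsetP subBA; apply: contra eA => /subBA.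
have := card_pole_maps_vertex eA xA.
rewrite (IH (A :\ x)) ?cardAx ?e_out ?subD1set //; last by rewrite -ltnS -cardA.
rewrite (eq_bigr (fun _ => 3 * pole_count (k - 2))); last first.
  move=> p /ordered_pairsP[p1A p2A neq12 neq1x neq2x].
  rewrite !IH ?e_out ?subsetDl ?cardsD3 ?cardA ?subSS // 1?eq_sym //; lia.
rewrite sum_nat_const card_ordered_pairs cardAx cardA pole_countS.
have := bin2_mul2 k; nia.
Qed.
End PoleMaps.

Section Polestar.
Variable X : finType.

Definition graph_on (P : {set {set X}}) (f : {ffun {set X} -> {set X}}) :
  {set {set X} * {set X}} := [set (S, f S) | S in P].

Definition stars (Sys : {set {set X} * {set X}}) : {set {set X}} := [set p.1 | p in Sys].

Lemma mem_graph_on P f p : (p \in graph_on P f) = (p.1 \in P) && (p.2 == f p.1).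
Proof.
apply/imsetP/andP => [[S SP ->] | [p1P /eqP p2]] /=; first by rewrite SP eqxx.
by exists p.1; last by rewrite -p2 -surjective_pairing.
Qed.

Lemma stars_graph_on P f : stars (graph_on P f) = P.
Proof.
apply/setP => S; apply/imsetP/idP => [[p] | SP]; first by rewrite mem_graph_on => /andP[? _] ->.
by exists (S, f S); rewrite // mem_graph_on /= SP eqxx.
Qed.

Lemma graph_on_inj P : {in pole_maps set0 P &, injective (graph_on P)}.
Proof.
move=> f1 f2 /pole_mapP[out1 _] /pole_mapP[out2 _] eq12; apply/ffunP => S.
have [SP | /[dup] /out1 -> /out2 -> //] := boolP (S \in P).
have : (S, f1 S) \in graph_on P f2 by rewrite -eq12 mem_graph_on /= SP eqxx.
by rewrite mem_graph_on /= => /andP[_ /eqP].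
Qed.

Section FromPoleMap.
Variables (P : {set {set X}}) (f : {ffun {set X} -> {set X}}).
Hypotheses (partP : partition P [set: X]) (fP : f \in pole_maps set0 P).

Let outP : forall S, S \notin P -> f S = set0. Proof. by case/pole_mapP: fP. Qed.
Let inP : forall S, f S != set0 ->
  [/\ f S \in P, f (f S) = set0 & #|[set U | f U == f S]| = 2].
Proof. by case/pole_mapP: fP. Qed.

Lemma set_pair_graph_on : set_pair_system (graph_on P f).
Proof.
apply/forallP => p; apply/implyP; rewrite mem_graph_on => /andP[p1P /eqP ->].
rewrite (partition_neq0 partP p1P) /=.
have [-> | fp1] := eqVneq (f p.1) set0; first by rewrite -setI_eq0 setI0.
have [fp1P ffp1 _] := inP fp1.
have neq_fp1 : f p.1 != p.1 by apply: contraNneq fp1 => eq_fp1; rewrite -ffp1 !eq_fp1.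
by apply: (trivIsetP (partition_trivIset partP)); rewrite // eq_sym.
Qed.

Lemma PL3_graph_on : PL3 (graph_on P f).
Proof.
apply/forallP => [[S H]]; apply/implyP; rewrite mem_graph_on /= => /andP[SP /eqP ->].
apply/implyP => fS; have [fSP ffS fiber2] := inP fS.
rewrite mem_graph_on /= fSP ffS eqxx /=.
have S_fiber : S \in [set U | f U == f S] by rewrite inE.
have [S' neq_S'S fiber_fS] := cards2_other fiber2 S_fiber.
have : S' \in [set U | f U == f S] by rewrite fiber_fS !inE eqxx orbT.
rewrite inE => /eqP fS'.
have S'P : S' \in P by apply: contraNT fS => /outP <-; rewrite fS'.
suff -> : [set q in graph_on P f | (q != (S, f S)) && (q.2 == f S)] = [set (S', f S')].
  by rewrite cards1.
apply/setP => [[U V]]; rewrite !inE mem_graph_on /=; apply/idP/idP.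
  case/and3P => /andP[UP /eqP ->] neq_US /eqP fU.
  have : U \in [set S; S'] by rewrite -fiber_fS inE fU.
  rewrite !inE => /orP[/eqP eq_US | /eqP ->]; last by rewrite eqxx.
  by move: neq_US; rewrite eq_US eqxx.
by move/eqP => [-> ->]; rewrite S'P fS' !eqxx andbT xpair_eqE (negbTE neq_S'S).
Qed.

Lemma polestar_graph_on : polestar_system (graph_on P f).
Proof.
apply/and4P; split; [exact: set_pair_graph_on | | | exact: PL3_graph_on].
  by rewrite /PL1 -/(stars _) stars_graph_on.
apply/forallP => p; apply/implyP; rewrite mem_graph_on => /andP[_ /eqP p2].
apply/forallP => q; apply/implyP; rewrite mem_graph_on => /andP[_ /eqP q2].
apply/implyP; apply: contraNneq => eq1.
by rewrite [p]surjective_pairing p2 eq1 -q2 -surjective_pairing.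
Qed.
End FromPoleMap.

(* The junk value [set0] outside [stars Sys] is what a pole map requires there. *)
Definition pole_of (Sys : {set {set X} * {set X}}) : {ffun {set X} -> {set X}} :=
  [ffun S => if [pick p in Sys | p.1 == S] is Some p then p.2 else set0].

Section ToPoleMap.
Variable Sys : {set {set X} * {set X}}.
Hypothesis polestarSys : polestar_system Sys.

Let fst_inj : {in Sys &, injective fst}.
Proof.
case/and4P: polestarSys => _ _ /forallP PL2Sys _ p q pSys qSys eq1.
apply/eqP/negPn/negP => neq_pq.
by have /forallP/(_ q) := implyP (PL2Sys p) pSys; rewrite qSys neq_pq eq1 eqxx.
Qed.

Lemma pole_ofE p : p \in Sys -> pole_of Sys p.1 = p.2.
Proof.
move=> pSys; rewrite ffunE; case: pickP => [q /andP[qSys /eqP eq1] | /(_ p)].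
  by rewrite (fst_inj qSys pSys eq1).
by rewrite pSys eqxx.
Qed.

Lemma pole_of_out S : S \notin stars Sys -> pole_of Sys S = set0.
Proof.
rewrite ffunE; case: pickP => [q /andP[qSys /eqP <-] | //].
by rewrite imset_f.
Qed.

Lemma graph_on_pole_of : graph_on (stars Sys) (pole_of Sys) = Sys.
Proof.
apply/setP => p; rewrite mem_graph_on; apply/andP/idP => [[/imsetP[q qSys eq1] /eqP p2] | pSys].
  by rewrite [p]surjective_pairing p2 eq1 pole_ofE // -surjective_pairing.
by rewrite pole_ofE // eqxx imset_f.
Qed.

Lemma pole_of_pole_map : pole_of Sys \in pole_maps set0 (stars Sys).
Proof.
case/and4P: polestarSys => _ _ _ /forallP PL3Sys.
apply/pole_mapP; split=> [|S]; first exact: pole_of_out.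
have [/imsetP[p pSys ->] | /pole_of_out -> /eqP //] := boolP (S \in stars Sys).
rewrite pole_ofE // => p2.
have /andP[p2Sys /eqP card1] := implyP (implyP (PL3Sys p) pSys) p2.
split; first by rewrite (imset_f _ p2Sys).
  by rewrite (pole_ofE p2Sys).
have -> : [set U | pole_of Sys U == p.2] = fst @: [set q in Sys | q.2 == p.2].
  apply/setP => U; rewrite inE; apply/eqP/imsetP => [fU | [q /[!inE] /andP[qSys /eqP q2] ->]].
    have [/imsetP[q qSys eqU] | /pole_of_out U0] := boolP (U \in stars Sys).
      by exists q; rewrite // inE qSys -(pole_ofE qSys) -eqU fU eqxx.
    by rewrite -fU U0 eqxx in p2.
  by rewrite pole_ofE.
rewrite card_in_imset; last by move=> q r /[!inE] /andP[qSys _] /andP[rSys _]; apply: fst_inj.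
rewrite (cardsD1 p) [p \in _]inE pSys eqxx -card1 add1n; congr _.+1.
by apply: eq_card => q; rewrite !inE andbCA.
Qed.
End ToPoleMap.
End Polestar.

Lemma num_polestar_partitions (X : finType) :
  num_polestar X = \sum_(P : {set {set X}} | partition P [set: X]) pole_count #|P|.
Proof.
rewrite /num_polestar -sum1_card (partition_big (@stars X) (fun P => partition P [set: X])).
  apply: eq_bigr => P partP; rewrite sum1dep_card.
  have -> : [set Sys | (Sys \in [set Sys | polestar_system Sys]) && (stars Sys == P)]
          = graph_on P @: pole_maps set0 P.
    apply/setP => Sys; rewrite !inE; apply/andP/imsetP => [[polestarSys /eqP <-] | [f fP ->]].
      by exists (pole_of Sys); rewrite ?pole_of_pole_map ?graph_on_pole_of.
    by rewrite polestar_graph_on // stars_graph_on.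
  by rewrite card_in_imset ?card_pole_maps ?(partition0 partP) //; apply: graph_on_inj.
by move=> Sys; rewrite inE => /and4P[].
Qed.

Definition partitions_of_size (X : finType) (k : nat) : {set {set {set X}}} :=
  [set P | partition P [set: X] && (#|P| == k)].

Lemma card_partitions_of_size_inj (U W : finType) (h : U -> W) k :
  injective h -> #|U| = #|W| -> #|partitions_of_size U k| <= #|partitions_of_size W k|.
Proof.
move=> inj_h cardUW.
have imT : h @: [set: U] = [set: W].
  by apply/eqP; rewrite eqEcard subsetT /= card_imset // !cardsT cardUW.
rewrite -(card_imset _ (imset_inj (imset_inj inj_h))); apply: subset_leq_card.
apply/subsetP => Q /imsetP[P]; rewrite !inE => /andP[partP cardP] ->.
by rewrite -imT imset_partition // partP card_imset //; apply: imset_inj.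
Qed.

Lemma card_partitions_of_size (X : finType) k : #|partitions_of_size X k| = alpha #|X| k.
Proof.
apply/eqP; rewrite eqn_leq (card_partitions_of_size_inj k (@enum_rank_inj X)) ?card_ord //=.
by apply: (card_partitions_of_size_inj k (@enum_val_inj _ X)); rewrite card_ord.
Qed.

Lemma alphan0 n : 0 < n -> alpha n 0 = 0.
Proof.
move=> n_gt0; apply/eqP; rewrite cards_eq0; apply/eqP/setP => P; rewrite !inE.
apply/negbTE/negP => /andP[partP /eqP/cards0_eq P0].
by have := card_partition partP; rewrite P0 big_set0 cardsT card_ord; lia.
Qed.

Lemma card_partition_le (X : finType) (P : {set {set X}}) :
  partition P [set: X] -> #|P| <= #|X|.
Proof.
move=> partP; rewrite -cardsT (card_partition partP) -sum1_card; apply: leq_sum => B BP.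
by rewrite card_gt0 (partition_neq0 partP BP).
Qed.

Lemma sum_partitions_by_size (X : finType) (F : nat -> nat) :
  \sum_(P : {set {set X}} | partition P [set: X]) F #|P|
    = \sum_(0 <= k < #|X|.+1) alpha #|X| k * F k.
Proof.
transitivity (\sum_(P : {set {set X}} | partition P [set: X])
                \sum_(0 <= k < #|X|.+1 | k == #|P|) F k).
  by apply: eq_bigr => P partP; rewrite big_nat1_eq ltnS card_partition_le.
rewrite (exchange_big_dep predT) //=; apply: eq_bigr => k _.
rewrite -card_partitions_of_size -sum_nat_const; apply: eq_bigl => P.
by rewrite inE eq_sym.
Qed.

Theorem mainTheorem10 (X : finType) (n : nat) :
  #|X| = n -> 1 <= n ->
  num_polestar X =
    \sum_(1 <= k < n.+1) alpha n k * (\sum_(0 <= l < (k %/ 3).+1) beta k l * 3 ^ l).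
Proof.
move=> <- X_gt0.
under eq_bigr => k _ do rewrite sum_beta.
by rewrite num_polestar_partitions sum_partitions_by_size big_ltn // alphan0.
Qed.
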